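(* Let $P$ be a Sylow $p$-subgroup and $Q$ a Sylow $q$-subgroup of a finite group $G$, where $p\neq q$ are primes. (1) If $a\ge 1$ is an integer with $|P:C_P(Q)|\ge p^a$, then $\Pr(P,Q)\le \frac{p^a+q-1}{p^aq}$. (2) If $[P,Q]\neq 1$, then $\Pr(P,Q)\le\frac{p+q-1}{pq}$.
   Context: For subsets $X,Y$ of a finite group, $\Pr(X,Y)=|\{(x,y)\in X\times Y: xy=yx\}|/(|X||Y|)$. $C_P(Q)$ is the centralizer of $Q$ in $P$. *)

From mathcomp Require Import all_boot all_order all_algebra all_fingroup all_solvable.
Set Implicit Arguments. Unset Strict Implicit. Unset Printing Implicit Defensive.
Import GRing.Theory Num.Theory.
Local Open Scope group_scope.

Definition comm_prob (gT : finGroupType) (X Y : {set gT}) : rat :=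
  (#|[set xy in setX X Y | ((xy.1 * xy.2)%g == (xy.2 * xy.1)%g)]|%:R
    / (#|X| * #|Y|)%:R)%R.

From mathcomp Require Import all_boot all_order all_algebra all_fingroup all_solvable.
From mathcomp Require Import zify.
Import GRing.Theory Num.Theory.
Local Open Scope group_scope.

(* Counting commuting pairs by their first coordinate gives
   |P||Q| Pr(P,Q) = sum_(x in P) |C_Q(x)|.  An x in C_P(Q) contributes |Q|;
   any other x has C_Q(x) proper in the q-group Q, so it contributes at most
   |Q|/q.  Since at most |P|/m elements of P centralize Q when
   |P : C_P(Q)| >= m, this gives Pr(P,Q) <= 1/q + (1 - 1/q)/m.  For (2), a
   nontrivial [P,Q] makes C_P(Q) proper in the p-group P, so m = p works. *)

Lemma pnat_leq (r n : nat) : r.-nat n -> 1 < n -> r <= n.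
Proof.
move=> rn n_gt1; have /eqnP <- : pdiv n \in (r : nat_pred) by rewrite (pnatPpi rn) ?pi_pdiv.
by rewrite pdiv_leq // ltnW.
Qed.

Lemma pgroup_index_geq (gT : finGroupType) (r : nat) (H K : {group gT}) :
  r.-group H -> ~~ (H \subset K) -> r <= #|H : K|.
Proof.
move=> rH not_sHK; apply: pnat_leq; last by rewrite indexg_gt1.
exact: pnat_dvd (dvdn_indexg H K) rH.
Qed.

Lemma card_subcent1_pgroup_leq (gT : finGroupType) (q : nat) (Q : {group gT}) (x : gT) :
  q.-group Q -> x \notin 'C(Q) -> q * #|'C_Q[x]| <= #|Q|.
Proof.
move=> qQ not_cQx; rewrite -(Lagrange (subsetIl Q 'C[x])) [leqRHS]mulnC leq_mul2r.
by rewrite pgroup_index_geq ?orbT // subsetI subxx sub_cent1.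
Qed.

Lemma card_commuting_pairs (gT : finGroupType) (X Y : {set gT}) :
  #|[set xy in setX X Y | xy.1 * xy.2 == xy.2 * xy.1]| = \sum_(x in X) #|'C_Y[x]|.
Proof.
rewrite -sum1_card (eq_bigl (fun xy => (xy.1 \in X) && (xy.2 \in 'C_Y[xy.1]))).
  by under [RHS]eq_bigr do rewrite -sum1_card; rewrite pair_big_dep.
by move=> [x y]; rewrite inE in_setX in_setI cent1E andbA eq_sym.
Qed.

Lemma sum_card_subcent1_leq (gT : finGroupType) (q : nat) (P Q : {group gT}) :
  q.-group Q ->
  q * \sum_(x in P) #|'C_Q[x]| <= #|Q| * (q * #|'C_P(Q)| + #|P :\: 'C(Q)|).
Proof.
move=> qQ; rewrite (big_setID 'C(Q)) /= mulnDr.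
have -> : \sum_(x in 'C_P(Q)) #|'C_Q[x]| = (#|'C_P(Q)| * #|Q|)%N.
  rewrite -sum_nat_const; apply: eq_bigr => x /setIP[_ cQx].
  by rewrite (setIidPl _) // sub_cent1.
set S := \sum_(x in P :\: 'C(Q)) _.
have le_qS : (q * S <= #|P :\: 'C(Q)| * #|Q|)%N.
  rewrite big_distrr -sum_nat_const leq_sum // => x /setDP[_ not_cQx].
  exact: card_subcent1_pgroup_leq.
rewrite mulnDr; apply: leq_add; first by rewrite mulnA mulnC.
by rewrite [leqRHS]mulnC.
Qed.

Lemma comm_prob_leq_index (gT : finGroupType) (q m : nat) (P Q : {group gT}) :
  prime q -> q.-group Q -> 0 < m -> m <= #|P : 'C_P(Q)| ->
  (comm_prob P Q <= ((m + q - 1)%:R / (m * q)%:R : rat))%R.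
Proof.
move=> q_pr qQ m_gt0 le_m_iC; have q_gt0 := prime_gt0 q_pr.
have P_gt0 := cardG_gt0 P; have Q_gt0 := cardG_gt0 Q.
rewrite /comm_prob card_commuting_pairs.
set N := \sum_(x in P) _.
have le_qN := @sum_card_subcent1_leq _ q P Q qQ; rewrite -/N in le_qN.
have le_mC : m * #|'C_P(Q)| <= #|P|.
  by rewrite -(Lagrange (subsetIl P 'C(Q))) [leqRHS]mulnC leq_mul2r le_m_iC orbT.
rewrite -(cardsID 'C(Q) P) in le_mC P_gt0 *.
set C := #|'C_P(Q)| in le_qN le_mC P_gt0 *; set D := #|P :\: 'C(Q)| in le_qN le_mC P_gt0 *.
have le_weights : m * (q * C + D) <= (m + q - 1) * (C + D).
  by case: q q_gt0 {q_pr qQ le_qN} => // r _; rewrite subn1 addnS /=; nia.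
have le_N : N * (m * q) <= (m + q - 1) * ((C + D) * #|Q|).
  have := leq_mul (leqnn m) le_qN; have := leq_mul (leqnn #|Q|) le_weights.
  nia.
rewrite ler_pdivrMr ?ltr0n ?muln_gt0 ?P_gt0 ?Q_gt0 //.
rewrite mulrAC ler_pdivlMr ?ltr0n ?muln_gt0 ?m_gt0 ?q_gt0 //.
by rewrite -!natrM ler_nat.
Qed.

Theorem lemma2p6 (gT : finGroupType) (G P Q : {group gT}) (p q : nat) :
  prime p -> prime q -> p != q ->
  P \in 'Syl_p(G) -> Q \in 'Syl_q(G) ->
  (forall a : nat, 1 <= a -> p ^ a <= #|P : 'C_P(Q)|%g ->
     (comm_prob P Q <= ((p ^ a + q - 1)%:R / (p ^ a * q)%:R : rat))%R) /\
  (([~: P, Q] != 1)%g ->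
     (comm_prob P Q <= ((p + q - 1)%:R / (p * q)%:R : rat))%R).
Proof.
move=> p_pr q_pr _ sylP sylQ.
have pP : p.-group P by move: sylP; rewrite inE => /pHall_pgroup.
have qQ : q.-group Q by move: sylQ; rewrite inE => /pHall_pgroup.
split=> [a _ le_pa_iC | ntPQ].
  by apply: comm_prob_leq_index; rewrite ?expn_gt0 ?prime_gt0.
apply: comm_prob_leq_index; rewrite ?prime_gt0 //.
apply: pgroup_index_geq; rewrite // subsetI subxx.
by apply: contra ntPQ => /commG1P ->.
Qed.
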